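(* Let the filtered space and outer-measure notation be as in the context. Let $I_0\in\mathscr D$ and let $h$ be a positive function on $I_0$ with $h,h^{-1}\in L^1(I_0,\nu)$. Define $H$ on $\mathscr D$ by $H(I)=1/\langle h^{-1}\rangle_I$ if $I\in\mathscr D(I_0)$ and $H(I)=0$ otherwise. Then $H\in L^1(\mathscr D,S^\infty)$ and $$\|H\|_{L^1(\mathscr D,S^\infty)}\le 2\|h\|_{L^1(\nu)} .$$
   Context: $(\mathcal X,\mathfrak S,\nu)$ is a $\sigma$-finite measure space with a filtration $(\mathfrak S_n)_{n\in\mathbb Z}$ of atomic $\sigma$-algebras, $\mathfrak S_n\subset\mathfrak S_{n+1}$; $\mathscr D_n$ is the countable disjoint family of atoms (of positive measure) of $\mathfrak S_n$ and $\mathscr D=\bigcup_n\mathscr D_n$; $\mathscr D(I)=\{I'\in\mathscr D:I'\subset I\}$; $|I|=\nu(I)$, $\langle f\rangle_I=|I|^{-1}\int_I f\,d\nu$. Outer measure: $\nu^*(\mathscr D(I))=\nu(I)$ for $I\in\mathscr D$, and for $\mathcal A\subset\mathscr D$, $\nu^*(\mathcal A)=\inf\sum_{I\in\mathcal K}\nu(I)$ over all $\mathcal K\subset\mathscr D$ with $\mathcal A\subset\bigcup_{I\in\mathcal K}\mathscr D(I)$. For $F:\mathscr D\to\mathbb C$, the size is $S^\infty F(\mathscr D(I))=\sup_{I'\in\mathscr D(I)}|F(I')|$. For $\lambda>0$, $\nu^*(S^\infty F>\lambda)=\inf\{\nu^*(\mathcal G):\mathcal G\subset\mathscr D,\ S^\infty(F\mathbf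 1_{\mathscr D\setminus\mathcal G})(\mathscr D(I))\le\lambda\ \forall I\in\mathscr D\}$, and $\|F\|_{L^p(\mathscr D,S^\infty)}=\big(p\int_0^\infty\lambda^{p-1}\nu^*(S^\infty F>\lambda)\,d\lambda\big)^{1/p}$; $L^p(\mathscr D,S^\infty)$ is the set of $F$ with finite norm. *)

From HB Require Import structures.
From mathcomp Require Import all_boot all_order all_algebra.
From mathcomp Require Import all_classical all_reals all_analysis.
Set Implicit Arguments. Unset Strict Implicit. Unset Printing Implicit Defensive.
Import Order.TTheory GRing.Theory Num.Theory.
Import numFieldNormedType.Exports.
Local Open Scope classical_set_scope.
Local Open Scope ring_scope.

Section Defs.
Context {d : measure_display} {T : measurableType d} {R : realType}.

(* A filtration (S_n)_{n in Z} of atomic sigma-algebras, given through the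
   families D n of its atoms of positive measure:
   - each D n is countable, consists of measurable sets of positive measure,
     pairwise disjoint;
   - the atoms of positive measure cover X up to a null set;
   - S_n ⊂ S_{n+1}: every atom of S_{n+1} (of positive measure) lies in an
     atom of S_n (of positive measure). *)
Definition atomic_filtration (mu : set T -> \bar R) (D : int -> set (set T)) :=
  [/\ forall n, countable (D n),
      forall n I, D n I -> measurable I /\ (0 < mu I)%E,
      forall n I J, D n I -> D n J -> I `&` J !=set0 -> I = J,
      forall n, mu (~` \bigcup_(I in D n) I) = 0%E
    & forall n J, D (n + 1)%R J -> exists I, D n I /\ J `<=` I].

Definition Dall (D : int -> set (set T)) : set (set T) :=
  [set I | exists n, D n I].

Definition Dsub (D : int -> set (set T)) (I : set T) : set (set T) :=
  [set I' | Dall D I' /\ I' `<=` I].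

(* outer measure on subsets of D generated by nu*(D(I)) = nu(I) *)
Definition nustar (mu : set T -> \bar R) (D : int -> set (set T))
    (A : set (set T)) : \bar R :=
  ereal_inf [set s | exists K : set (set T),
    [/\ K `<=` Dall D, A `<=` \bigcup_(I in K) Dsub D I
      & s = (\esum_(I in K) mu I)%E]].

Definition Sinf (D : int -> set (set T)) (F : set T -> R) (I : set T) : \bar R :=
  ereal_sup [set (`|F J|)%:E | J in Dsub D I].

Definition restrict_out (D : int -> set (set T)) (G : set (set T))
    (F : set T -> R) : set T -> R :=
  fun J => if `[< (Dall D `\` G) J >] then F J else 0.

Definition nustar_level (mu : set T -> \bar R) (D : int -> set (set T))
    (F : set T -> R) (lambda : R) : \bar R :=
  ereal_inf [set nustar mu D G | G in
    [set G | G `<=` Dall D /\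
       forall I, Dall D I -> (Sinf D (restrict_out D G F) I <= lambda%:E)%E]].

Definition L1Sinf_norm (mu : set T -> \bar R) (D : int -> set (set T))
    (F : set T -> R) : \bar R :=
  (\int[lebesgue_measure]_(l in `]0%R, +oo[) nustar_level mu D F l)%E.

Definition avg (mu : set T -> \bar R) (f : T -> R) (I : set T) : R :=
  (fine (mu I))^-1 * fine (\int[mu]_(x in I) (f x)%:E)%E.

Definition Hfun (mu : set T -> \bar R) (D : int -> set (set T)) (I0 : set T)
    (h : T -> R) : set T -> R :=
  fun I => if `[< Dsub D I0 I >] then (avg mu (fun x => (h x)^-1) I)^-1 else 0.

End Defs.

From HB Require Import structures.
From mathcomp Require Import all_boot all_order all_algebra.
From mathcomp Require Import all_classical all_reals all_analysis.
From mathcomp Require Import finmap measurable_realfun.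
From mathcomp Require Import ring lra.
Import Order.TTheory GRing.Theory Num.Theory.
Import numFieldNormedType.Exports.
Local Open Scope classical_set_scope.
Local Open Scope ring_scope.

(* For l > 0 let G be the set of atoms I of D(I0) with H(I) > l. Outside G the
   size of H is at most l, so nu*(S^oo H > l) <= nu*(G), and G is covered by its
   maximal elements, which are pairwise disjoint atoms. On such an atom A,
   H(A) > l means l * int_A h^-1 < |A|, whence
   |A| <= 2|A| - l * int_A h^-1 <= int_A (2 - l / h)_+.
   Summing over the maximal atoms gives nu*(S^oo H > l) <= int_I0 (2 - l / h)_+,
   and integrating in l (Tonelli) yields int_I0 2h, because
   int_0^oo (2 - l c)_+ dl = 2 / c. *)

Lemma int_le_add_nat {n m : int} : n <= m -> exists k : nat, m = n + k%:Z.
Proof.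
by move=> nm; exists `|m - n|%N; rewrite gez0_abs ?subr_ge0 // addrCA subrr addr0.
Qed.

Definition maximal_sets {T : Type} (G : set (set T)) : set (set T) :=
  [set A | G A /\ forall B, G B -> A `<=` B -> B = A].

Section atomic_filtration.
Context {d} {T : measurableType d} {R : realType} {mu : {measure set T -> \bar R}}
  {D : int -> set (set T)}.
Hypothesis filtD : atomic_filtration mu D.

Lemma atom_neq0 {n A} : D n A -> A !=set0.
Proof.
case: filtD => _ Dpos _ _ _ /Dpos [_ muA0]; apply/set0P/negP => /eqP A0.
by move: muA0; rewrite A0 measure0 ltxx.
Qed.

Lemma atom_sub_coarser {n} {k : nat} {B} :
  D (n + k%:Z) B -> exists2 A, D n A & B `<=` A.
Proof.
case: filtD => _ _ _ _ Dnest; elim: k B => [|k IHk] B.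
  by rewrite addr0 => DB; exists B.
rewrite -addn1 PoszD addrA => /Dnest [C [DC BC]].
by have [A DA CA] := IHk _ DC; exists A => //; exact: subset_trans CA.
Qed.

Lemma atom_sub_meet {n} {k : nat} {A B} :
  D n A -> D (n + k%:Z) B -> A `&` B !=set0 -> B `<=` A.
Proof.
case: filtD => _ _ Ddisj _ _ DA DB [x [Ax Bx]].
have [C DC BC] := atom_sub_coarser DB.
by rewrite (Ddisj n A C) //; exists x; split => //; exact: BC.
Qed.

Lemma Dsub_level_ge {n0 I0 B} :
  D n0 I0 -> Dsub D I0 B -> exists k : nat, D (n0 + k%:Z) B.
Proof.
move=> DI0 [[m DB] BI0]; have [n0m|mn0] := leP n0 m.
  by have [k em] := int_le_add_nat n0m; exists k; rewrite -em.
have [k em] := int_le_add_nat (ltW mn0); move: DI0; rewrite em => DI0'.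
have I0B : I0 `<=` B.
  apply: (atom_sub_meet DB DI0'); have [x Bx] := atom_neq0 DB.
  by exists x; split => //; exact: BI0.
by exists 0%N; rewrite addr0 (_ : B = I0) //; apply/seteqP; split.
Qed.

Lemma maximal_atoms_disjoint (G : set (set T)) A B : G `<=` Dall D ->
  maximal_sets G A -> maximal_sets G B -> A `&` B !=set0 -> A = B.
Proof.
move=> GD [GA maxA] [GB maxB] AB.
have [[n DA] [m DB]] := (GD _ GA, GD _ GB).
have [nm|mn] := leP n m.
- have [k em] := int_le_add_nat nm; rewrite em in DB.
  by apply: maxB => //; exact: (atom_sub_meet DA DB).
- have [k en] := int_le_add_nat (ltW mn); rewrite en in DA.
  apply/esym/maxA => //; apply: (atom_sub_meet DB DA).
  by rewrite setIC.
Qed.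

Lemma maximal_atoms_cover {n0 I0} {G : set (set T)} {J} : D n0 I0 ->
  G `<=` Dsub D I0 -> G J -> exists2 A, maximal_sets G A & J `<=` A.
Proof.
move=> DI0 GI0 GJ.
pose covers_at k := exists B, [/\ D (n0 + k%:Z) B, J `<=` B & G B].
have [k0 DJ] := Dsub_level_ge DI0 (GI0 _ GJ).
have covers_at_k0 : exists k, `[< covers_at k >].
  by exists k0; apply/asboolP; exists J; split.
(* the coarsest element of G above J is maximal *)
case: (ex_minnP covers_at_k0) => k /asboolP [A [DA JA GA]] kmin.
exists A => //; split => // B GB AB.
have [k' DB] := Dsub_level_ge DI0 (GI0 _ GB).
have [kk'|k'k] := leqP k k'.
- have DB' : D (n0 + k%:Z + (k' - k)%N%:Z) B by rewrite -addrA -PoszD subnKC.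
  apply/seteqP; split; last exact: AB.
  apply: (atom_sub_meet DA DB'); have [x Ax] := atom_neq0 DA.
  by exists x; split => //; exact: AB.
- have : (k <= k')%N.
    by apply: kmin; apply/asboolP; exists B; split => //; exact: subset_trans AB.
  by rewrite leqNgt k'k.
Qed.

End atomic_filtration.

Section integral_bounds.
Context {d} {T : measurableType d} {R : realType} (mu : {measure set T -> \bar R}).
Local Open Scope ereal_scope.

Lemma ge0_le_integral_nonmeasurable (E : set T) (f g : T -> \bar R) :
  (forall x, E x -> 0 <= f x) -> (forall x, E x -> f x <= g x) ->
  \int[mu]_(x in E) f x <= \int[mu]_(x in E) g x.
Proof.
move=> f0 fg; rewrite !(integral_mkcond E).
have fg' x : (f \_ E) x <= (g \_ E) x by rewrite /patch; case: ifP => // /set_mem /fg.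
have f0' x : 0 <= (f \_ E) x by rewrite /patch; case: ifP => // /set_mem /f0.
have g0' x : 0 <= (g \_ E) x := le_trans (f0' x) (fg' x).
rewrite !ge0_integralTE //; apply: ereal_sup_le => _ [s sf <-].
by exists s => //= x; exact: le_trans (sf x) (fg' x).
Qed.

Lemma esum_measure_le_integral (K : set (set T)) (E : set T) (f : T -> \bar R) :
  measurable E -> (forall A, K A -> measurable A /\ A `<=` E) ->
  (forall A B, K A -> K B -> A `&` B !=set0 -> A = B) ->
  measurable_fun E f -> (forall x, E x -> 0 <= f x) ->
  (forall A, K A -> mu A <= \int[mu]_(x in A) f x) ->
  \esum_(A in K) mu A <= \int[mu]_(x in E) f x.
Proof.
move=> mE KE Kdisj mf f0 muf; apply: ge_ereal_sup => _ [X [/finite_fsetP [s ->] sK] <-].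
have sK' A : A \in s -> K A by move=> As; apply: sK.
(* [F] is the identity on [s], extended so that every [F A] is measurable *)
pose F A := if A \in s then A else set0.
have mF A : measurable (F A) by rewrite /F; case: ifP => // /sK' /KE [].
have FE : \big[setU/set0]_(A <- s) F A `<=` E.
  rewrite big_seq; elim/big_rec: _ => // A U As UE.
  by rewrite /F As subUset; split => //; case: (KE _ (sK' _ As)).
rewrite -fsbig_seq ?fset_uniq //.
apply: (@le_trans _ _ (\sum_(A <- s) \int[mu]_(x in F A) f x)).
  rewrite big_seq [leRHS]big_seq; apply: lee_sum => A As.
  by rewrite /F As; apply: muf; exact: sK'.
rewrite -ge0_integral_bigsetU ?fset_uniq //; last 3 first.
- move=> A B /= As Bs; rewrite /F As Bs; exact: Kdisj (sK' _ As) (sK' _ Bs).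
- exact: measurable_funS mf.
- by move=> x /FE /f0.
by apply: ge0_subset_integral => //; exact: bigsetU_measurable.
Qed.

End integral_bounds.

Section single_set_bounds.
Context {d} {T : measurableType d} {R : realType} (mu : {measure set T -> \bar R}).

Lemma integrable_inv_finite_measure {E : set T} {h : T -> R} : measurable E ->
  (forall x, E x -> 0 < h x) ->
  mu.-integrable E (fun x => (h x)%:E) -> mu.-integrable E (fun x => ((h x)^-1)%:E) ->
  (mu E < +oo)%E.
Proof.
move=> mE hpos ih ig; have ihg := integrableD mE ih ig.
apply: le_lt_trans (integrable_lty mE ihg); rewrite -[mu E]mul1e -integral_cst //.
apply: ge0_le_integral => //; first exact: (measurable_int mu ihg).
move=> x Ex; rewrite /= lee_fin; have hx := hpos x Ex.
have [h1|h1] := leP 1 (h x); first by rewrite (le_trans h1) // lerDl invr_ge0 ltW.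
by rewrite (le_trans (ltW (_ : 1 < (h x)^-1))) ?invf_gt1 // lerDr ltW.
Qed.

Lemma avg_ge0 (A : set T) (g : T -> R) : (forall x, A x -> 0 <= g x) ->
  0 <= avg mu g A.
Proof.
move=> g0; apply: mulr_ge0; first by rewrite invr_ge0 fine_ge0.
by apply/fine_ge0/integral_ge0 => x Ax; rewrite lee_fin g0.
Qed.

Lemma mul_integral_le_of_lt_inv_avg (A : set T) (g : T -> R) (l : R) :
  measurable A -> (mu A < +oo)%E -> mu.-integrable A (fun x => (g x)%:E) ->
  (forall x, A x -> 0 <= g x) -> l < (avg mu g A)^-1 ->
  (l%:E * \int[mu]_(x in A) (g x)%:E <= mu A)%E.
Proof.
move=> mA muA ig g0; rewrite /avg.
set m := fine (mu A); set s := fine (\int[mu]_(x in A) (g x)%:E)%E => lAs.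
have -> : mu A = m%:E by rewrite fineK // ge0_fin_numE.
have -> : (\int[mu]_(x in A) (g x)%:E = s%:E)%E by rewrite fineK // integrable_fin_num.
have s0 : 0 <= s by apply/fine_ge0/integral_ge0 => x Ax; rewrite lee_fin g0.
rewrite -EFinM lee_fin; have [->|sn0] := eqVneq s 0; first by rewrite mulr0 fine_ge0.
have sp : 0 < s by rewrite lt_def sn0.
by move: lAs; rewrite invfM invrK ltr_pdivlMr // => /ltW.
Qed.

Lemma measure_le_integral_truncation (A : set T) (g : T -> R) (l : R) :
  measurable A -> (mu A < +oo)%E -> measurable_fun A g ->
  (forall x, A x -> 0 <= g x) -> 0 <= l ->
  (l%:E * \int[mu]_(x in A) (g x)%:E <= mu A)%E ->
  (mu A <= \int[mu]_(x in A) (Num.max 0 (2 - l * g x))%:E)%E.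
Proof.
move=> mA muA mg g0 l0 lgA; set f := fun x => (Num.max 0 (2 - l * g x))%:E.
have mf : measurable_fun A f.
  by apply/measurable_EFinP/measurable_maxr => //; apply/measurable_funB/measurable_funM.
have mlg : measurable_fun A (fun x => (l * g x)%:E).
  by apply/measurable_EFinP/measurable_funM.
have two_mu : (2%:E * mu A <=
    \int[mu]_(x in A) f x + l%:E * \int[mu]_(x in A) (g x)%:E)%E.
  rewrite -integral_cst // -ge0_integralZl_EFin //; last exact/measurable_EFinP.
  rewrite -ge0_integralD //; first last.
  - by move=> x Ax; rewrite lee_fin mulr_ge0 ?g0.
  - by move=> x _; rewrite lee_fin le_max lexx.
  apply: ge0_le_integral => //.
  - by move=> x _; rewrite lee_fin.
  - by apply: emeasurable_funD => //; exact: measurable_funeM.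
  move=> x Ax; rewrite /f /= -EFinD lee_fin.
  by rewrite -[X in X <= _](subrK (l * g x) 2) lerD2r le_max lexx orbT.
have muA_fin : mu A \is a fin_num by rewrite ge0_fin_numE.
rewrite -(leeD2rE _ _ muA_fin); apply: le_trans (le_trans two_mu (leeD2l _ lgA)).
by rewrite -(fineK muA_fin) -EFinD -EFinM lee_fin; lra.
Qed.

End single_set_bounds.

Lemma integral_truncated_affine {R : realType} {a c : R} : 0 < a -> 0 < c ->
  (\int[lebesgue_measure]_(l in `]0%R, +oo[%classic) (Num.max 0 (a - l * c))%:E =
    (a ^+ 2 / (c *+ 2))%:E)%E.
Proof.
move=> a0 c0; rewrite integral_itv_obnd_cbnd; last first.
  by apply/measurable_EFinP/measurable_maxr => //; apply/measurable_funB/measurable_funM.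
set L := a / c; have L0 : 0 < L by rewrite divr_gt0.
(* p is a primitive of the integrand on [0, L], and the integrand vanishes beyond L *)
pose p : {poly R} := a *: 'X - (c / 2) *: 'X^2.
have dp l : p^`().[l] = a - l * c.
  by rewrite /p derivB !derivZ derivX derivXn !hornerE /=; field.
transitivity (\int[lebesgue_measure]_(l in `[0%R, L]) (p^`().[l])%:E)%E.
  rewrite integral_mkcond [RHS]integral_mkcond; apply: eq_integral => l _ /=.
  rewrite /patch dp !mem_setE !in_itv /= andbT.
  have cL : L * c = a by rewrite /L divfK // gt_eqF.
  case: (leP 0 l) => l0 //=; case: (leP l L) => lL /=.
    by congr (_%:E); apply/max_idPr; rewrite subr_ge0 -cL ler_pM2r.
  by congr (_%:E); apply/max_idPl; rewrite subr_le0 -cL ler_pM2r // ltW.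
rewrite (@continuous_FTC2 _ _ (horner p)) //.
- rewrite -EFinB /p !(hornerD, hornerN, hornerZ, hornerX, hornerXn) /L.
  by congr (_%:E); field; rewrite gt_eqF.
- by apply: continuous_subspaceT; exact: continuous_horner.
- split.
  + by move=> x _; exact: derivable_horner.
  + by apply: cvg_at_right_filter; exact: continuous_horner.
  + by apply: cvg_at_left_filter; exact: continuous_horner.
- by move=> x _; rewrite -derivE.
Qed.

Section truncation_layers.
Context {d} {T : measurableType d} {R : realType} (mu : {measure set T -> \bar R}).
Hypothesis mu_sfin : sigma_finite setT mu.

(* a copy of mu carrying the sigma-finite measure structure fubini_tonelli requires *)
Let mu_sf : set T -> \bar R := mu.
HB.instance Definition _ := Measure.on mu_sf.
HB.instance Definition _ := @Measure_isSigmaFinite.Build d T R mu_sf mu_sfin.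

Lemma integral_truncation_layers (E : set T) (g : T -> R) :
  measurable E -> measurable_fun E g -> (forall x, E x -> 0 < g x) ->
  (\int[lebesgue_measure]_(l in `]0%R, +oo[%classic)
      \int[mu]_(x in E) (Num.max 0 (2 - l * g x))%:E =
    \int[mu]_(x in E) (2 / g x)%:E)%E.
Proof.
move=> mE mg gpos; set P := `]0%R, +oo[%classic.
pose k := g \_ E.
pose F (z : (measurableTypeR R * T)%type) :=
  (\1_(P `*` E) z * Num.max 0 (2 - z.1 * k z.2))%:E.
have mF : measurable_fun setT F.
  apply/measurable_EFinP/measurable_funM.
    by apply: measurable_indic; apply: measurableX => //; exact: measurable_itv.
  apply: measurable_maxr => //; apply/measurable_funB/measurable_funM => //.
  apply: measurableT_comp => //; exact: (measurable_restrictT _ mE).1.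
have F0 z : (0 <= F z)%E by rewrite lee_fin mulr_ge0 // le_max lexx.
have F_at l x : F (l, x) = (if (l \in P) && (x \in E) then
    (Num.max 0 (2 - l * g x))%:E else 0)%E.
  rewrite /F indicE in_setX /=; case: ifPn => [/andP[_ xE]|_]; last by rewrite mul0r.
  by rewrite mul1r /k /patch xE.
transitivity (\int[lebesgue_measure]_l \int[mu_sf]_x F (l, x))%E.
  rewrite integral_mkcond; apply: eq_integral => l _; rewrite /patch.
  case: ifPn => lP; last by apply/esym/integral0_eq => x _; rewrite F_at (negbTE lP).
  by rewrite integral_mkcond; apply: eq_integral => x _; rewrite F_at lP /patch.
rewrite fubini_tonelli // [RHS]integral_mkcond; apply: eq_integral => x _ /=.
rewrite /patch; case: ifPn => xE; last first.
  by apply: integral0_eq => l _; rewrite F_at (negbTE xE) andbF.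
have gx := gpos x (set_mem xE).
have -> : 2 / g x = 2 ^+ 2 / (g x *+ 2) by rewrite mulr2n; field; rewrite gt_eqF.
rewrite -(integral_truncated_affine (_ : 0 < 2) gx) // [RHS]integral_mkcond.
by apply: eq_integral => l _; rewrite F_at xE andbT /patch.
Qed.

End truncation_layers.

Section superlevel_sets.
Context {d} {T : measurableType d} {R : realType} (mu : {measure set T -> \bar R})
  (D : int -> set (set T)).

Lemma nustar_level_le_superlevel (F : set T -> R) (l : R) : 0 <= l ->
  (nustar_level mu D F l <= nustar mu D [set J | Dall D J /\ (l < `|F J|)%R])%E.
Proof.
move=> l0; set G := [set J | Dall D J /\ (l < `|F J|)%R].
rewrite /nustar_level; apply: ereal_inf_lbound; exists G => //.
split=> [J [] //|I _]; rewrite /Sinf; apply: ge_ereal_sup => y [J _ <-].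
rewrite lee_fin /restrict_out; case: (pselect ((Dall D `\` G) J)) => [[DJ notGJ]|notJ].
  by rewrite asboolT // leNgt; apply/negP => lFJ; exact: notGJ.
by rewrite asboolF // normr0.
Qed.

Lemma nustar_level_ge0 (F : set T -> R) (l : R) : (0 <= nustar_level mu D F l)%E.
Proof.
apply: le_ereal_inf_tmp => _ [G _ <-]; apply: le_ereal_inf_tmp => _ [K [_ _ ->]].
exact: esum_ge0.
Qed.

Hypothesis filtD : atomic_filtration mu D.
Variables (I0 : set T) (h : T -> R).
Hypotheses (DI0 : Dall D I0) (hpos : forall x, I0 x -> 0 < h x).
Hypothesis muI0 : (mu I0 < +oo)%E.
Hypothesis ih_inv : mu.-integrable I0 (fun x => ((h x)^-1)%:E).

Lemma nustar_level_Hfun_le (l : R) : 0 < l ->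
  (nustar_level mu D (Hfun mu D I0 h) l <=
     \int[mu]_(x in I0) (Num.max 0 (2 - l * (h x)^-1))%:E)%E.
Proof.
move=> l0; have [n0 DI0'] := DI0; have [_ Dmeas _ _ _] := filtD.
have [mI0 _] := Dmeas _ _ DI0'.
have hinv0 x : I0 x -> 0 <= (h x)^-1 by move=> /hpos/ltW; rewrite invr_ge0.
have mhinv : measurable_fun I0 (fun x => (h x)^-1).
  by apply/measurable_EFinP; exact: (measurable_int mu ih_inv).
set G := [set J | Dall D J /\ l < `|Hfun mu D I0 h J|].
have GI0 : G `<=` Dsub D I0.
  move=> J [_]; rewrite /Hfun; case: (pselect (Dsub D I0 J)) => // nJ.
  by rewrite asboolF // normr0 ltNge ltW.
set K := maximal_sets G.
have KI0 A : K A -> measurable A /\ A `<=` I0.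
  by move=> [/GI0 [[n DA] AI0] _]; split => //; have [] := Dmeas _ _ DA.
apply: le_trans (nustar_level_le_superlevel _ _ (ltW l0)) _.
apply: le_trans (_ : nustar mu D G <= \esum_(A in K) mu A)%E _.
  apply: ereal_inf_lbound; exists K => //; split => [A [/GI0 [] //]|J GJ|//].
  have [A KA JA] := maximal_atoms_cover filtD DI0' GI0 GJ.
  by exists A => //; split => //; case: (GI0 _ GJ).
apply: esum_measure_le_integral => //.
- by move=> A B KA KB; apply: (maximal_atoms_disjoint filtD G) => // J /GI0 [].
- by apply/measurable_EFinP/measurable_maxr => //; apply/measurable_funB/measurable_funM.
- by move=> x _; rewrite lee_fin le_max lexx.
move=> A KA; have [mA AI0] := KI0 _ KA; have [GA _] := KA.
have [_] := GA; rewrite /Hfun asboolT; last exact: GI0.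
rewrite ger0_norm ?invr_ge0 ?avg_ge0 //; last by move=> x /AI0; exact: hinv0.
have muA : (mu A < +oo)%E.
  exact: le_lt_trans (le_measure _ (mem_set mA) (mem_set mI0) AI0) muI0.
have hinvA0 x : A x -> 0 <= (h x)^-1 by move/AI0; exact: hinv0.
move=> lA; apply: measure_le_integral_truncation => //.
- exact: measurable_funS mhinv.
- exact: ltW.
apply: mul_integral_le_of_lt_inv_avg => //; exact: integrableS mI0 mA AI0 ih_inv.
Qed.

End superlevel_sets.

Theorem lemma4p2 (d : measure_display) (T : measurableType d) (R : realType)
    (mu : {measure set T -> \bar R}) (D : int -> set (set T))
    (I0 : set T) (h : T -> R) :
  sigma_finite setT mu ->
  atomic_filtration mu D ->
  Dall D I0 ->
  (forall x, I0 x -> 0 < h x) ->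
  mu.-integrable I0 (fun x => (h x)%:E) ->
  mu.-integrable I0 (fun x => ((h x)^-1)%:E) ->
  (L1Sinf_norm mu D (Hfun mu D I0 h) < +oo)%E /\
  (L1Sinf_norm mu D (Hfun mu D I0 h)
     <= 2%:E * \int[mu]_(x in I0) (`|h x|)%:E)%E.
Proof.
move=> mu_sfin filtD DI0 hpos ih ih_inv.
have [_ Dmeas _ _ _] := filtD; have [n0 /Dmeas [mI0 _]] := DI0.
have muI0 := integrable_inv_finite_measure mu mI0 hpos ih ih_inv.
have hinv_pos x : I0 x -> 0 < (h x)^-1 by move=> /hpos; rewrite invr_gt0.
have mh : measurable_fun I0 h by apply/measurable_EFinP; exact: (measurable_int mu ih).
have mhinv : measurable_fun I0 (fun x => (h x)^-1).
  by apply/measurable_EFinP; exact: (measurable_int mu ih_inv).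
have norm_le : (L1Sinf_norm mu D (Hfun mu D I0 h) <=
    2%:E * \int[mu]_(x in I0) (`|h x|)%:E)%E.
  apply: le_trans (ge0_le_integral_nonmeasurable lebesgue_measure _ _
    (fun l => \int[mu]_(x in I0) (Num.max 0 (2 - l * (h x)^-1))%:E)%E _ _) _.
  - by move=> l _; exact: nustar_level_ge0.
  - move=> l; rewrite /= in_itv /= andbT => l0.
    exact: nustar_level_Hfun_le.
  rewrite integral_truncation_layers // (eq_integral (fun x => 2%:E * `|h x|%:E))%E.
    by rewrite ge0_integralZl_EFin //; exact/measurable_EFinP/measurableT_comp.
  by move=> x /set_mem I0x; rewrite invrK EFinM ger0_norm // ltW // hpos.
split=> //; apply: le_lt_trans norm_le _.
by apply: lte_mul_pinfty => //; move/integrableP: ih => [_].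
Qed.
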